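(* Let $(\mathcal{K},\mathbb{R},\mathbf{T},\alpha)$ be a DG-category and $W$ a Weil $k$-algebra. The functor $\mathbf{V}^W:\overrightarrow{\mathcal{K}}\to\mathcal{K}$ is left exact.
   Context: Let $k$ be a commutative ring and $\mathbf{Weil}_k$ the category of Weil $k$-algebras; $\underline{\tau}_W:W\to k$ is the unique morphism and $\underline{\iota}_W:k\to W$ the structure map. For a left exact $\mathcal{K}$ and commutative $k$-algebra object $\mathbb{R}$, $\mathbb{R}\underline{\otimes}\cdot$ is the canonical functor from $\mathbf{Weil}_k$ to $k$-algebra objects in $\mathcal{K}$. A DG-category is a quadruple $(\mathcal{K},\mathbb{R},\mathbf{T},\alpha)$ where: (1) $\mathcal{K}$ is left exact and cartesian closed; (2) $\mathbb{R}$ is a commutative $k$-algebra object; (3) for each Weil $k$-algebra $W$, $\mathbf{T}^W:\mathcal{K}\to\mathcal{K}$ is left exact, $\mathbf{T}^k=\mathrm{id}$, and $\mathbf{T}^{W_2}\circ\mathbf{T}^{W_1}=\mathbf{T}^{W_1\otimes_kW_2}$; (4) $\mathbf{T}^W\mathbb{R}=\mathbb{R}\underline{\otimes}W$; (5) for each $\varphi:W_1\to W_2$, $\alpha_\varphi:\mathbf{T}^{W_1}\to\mathbf{T}^{W_2}$ is natural with $\alpha_\psi\cdot\alpha_\varphi=\alpha_{\psi\circ\varphi}$, $\alpha_{\mathrm{id}_W}=\mathrm{id}$; (6) $\alpha_\varphi(\mathbb{R})=\mathbb{R}\underline{\otimes}\varphi$. Write $X\otimes W:=\mathbf{T}^WX$,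 $f\otimes\mathrm{id}_W:=\mathbf{T}^Wf$, $\tau_W:=\alpha_{\underline{\tau}_W}$, $\iota_W:=\alpha_{\underline{\iota}_W}$. $\overrightarrow{\mathcal{K}}$ is the arrow category of $\mathcal{K}$. For an object $\pi:E\to M$ of $\overrightarrow{\mathcal{K}}$, $\mathbf{V}^W(\pi)$ is the equalizer (with inclusion $\widetilde{\tau}^{\mathbf{V}}_W(\pi):\mathbf{V}^W(\pi)\to E\otimes W$) of $\pi\otimes\mathrm{id}_W:E\otimes W\to M\otimes W$ and $\iota_{W,M}\circ\pi\circ\tau_{W,E}:E\otimes W\to M\otimes W$; for a morphism $(f,\overline f):\pi_1\to\pi_2$ of $\overrightarrow{\mathcal{K}}$ (with $\pi_2 f=\overline f\pi_1$), $\mathbf{V}^W((f,\overline f)):\mathbf{V}^W(\pi_1)\to\mathbf{V}^W(\pi_2)$ is the unique morphism with $\widetilde{\tau}^{\mathbf{V}}_W(\pi_2)\circ\mathbf{V}^W((f,\overline f))=(f\otimes\mathrm{id}_W)\circ\widetilde{\tau}^{\mathbf{V}}_W(\pi_1)$. This defines a functor $\mathbf{V}^W:\overrightarrow{\mathcal{K}}\to\mathcal{K}$. *)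

From HB Require Import structures.
From mathcomp Require Import all_boot all_algebra.
From Stdlib Require Import ProofIrrelevance FunctionalExtensionality JMeq List.
Set Implicit Arguments. Unset Strict Implicit. Unset Printing Implicit Defensive.
Import GRing.Theory.
Local Open Scope ring_scope.

Record Category := {
  Obj :> Type;
  Hom : Obj -> Obj -> Type;
  idm : forall X, Hom X X;
  comp : forall X Y Z, Hom Y Z -> Hom X Y -> Hom X Z;
  comp_id_l : forall X Y (f : Hom X Y), comp (idm Y) f = f;
  comp_id_r : forall X Y (f : Hom X Y), comp f (idm X) = f;
  comp_assoc : forall X Y Z U (f : Hom X Y) (g : Hom Y Z) (h : Hom Z U),
      comp h (comp g f) = comp (comp h g) f }.
Arguments idm {c} X : rename.
Arguments comp {c X Y Z} : rename.
Arguments Hom {c} : rename.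

Record Functor (C D : Category) := {
  fobj :> C -> D;
  fmap : forall X Y, Hom X Y -> Hom (fobj X) (fobj Y);
  fmap_id : forall X, fmap (idm X) = idm (fobj X);
  fmap_comp : forall X Y Z (f : Hom X Y) (g : Hom Y Z),
      fmap (comp g f) = comp (fmap g) (fmap f) }.
Arguments fmap {C D} F {X Y} : rename.

Definition idF (C : Category) : Functor C C.
Proof.
refine {| fobj := fun X => X; fmap := fun X Y f => f |}; reflexivity.
Defined.

(* compF F G = G o F  ("first F, then G") *)
Definition compF (C D E : Category) (F : Functor C D) (G : Functor D E) :
  Functor C E.
Proof.
refine {| fobj := fun X => G (F X); fmap := fun X Y f => fmap G (fmap F f) |}.
- by move=> X; rewrite !fmap_id.
- by move=> X Y Z f g; rewrite !fmap_comp.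
Defined.

Definition FinCat (J : Category) : Prop :=
  (exists l : list J, forall x, In x l) /\
  (forall i j : J, exists l : list (Hom i j), forall f, In f l).

Record Cone (J K : Category) (D : Functor J K) := {
  apex : K;
  leg : forall j, Hom apex (D j);
  leg_nat : forall i j (u : Hom i j), comp (fmap D u) (leg i) = leg j }.
Arguments apex {J K D} : rename.
Arguments leg {J K D} : rename.

Definition IsLimit (J K : Category) (D : Functor J K) (c : Cone D) : Prop :=
  forall c' : Cone D, exists! h : Hom (apex c') (apex c),
    forall j, comp (leg c j) h = leg c' j.

Definition finitely_complete (K : Category) : Prop :=
  forall J : Category, FinCat J -> forall D : Functor J K,
    exists c : Cone D, IsLimit c.

Definition map_cone (J K L : Category) (D : Functor J K) (F : Functor K L)
  (c : Cone D) : Cone (compF D F).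
Proof.
refine (@Build_Cone J L (compF D F) (F (apex c)) (fun j => fmap F (leg c j)) _).
by move=> i j u /=; rewrite -fmap_comp leg_nat.
Defined.

Definition left_exact_functor (K L : Category) (F : Functor K L) : Prop :=
  forall J : Category, FinCat J -> forall (D : Functor J K) (c : Cone D),
    IsLimit c -> IsLimit (map_cone F c).

Record Terminal (K : Category) := {
  tobj : K;
  bang : forall X : K, Hom X tobj;
  bang_uniq : forall X (f : Hom X tobj), f = bang X }.

Record Product (K : Category) (A B : K) := {
  pobj : K;
  pr1 : Hom pobj A;
  pr2 : Hom pobj B;
  ppair : forall X, Hom X A -> Hom X B -> Hom X pobj;
  pair_pr1 : forall X (f : Hom X A) (g : Hom X B), comp pr1 (ppair f g) = f;
  pair_pr2 : forall X (f : Hom X A) (g : Hom X B), comp pr2 (ppair f g) = g;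
  pair_uniq : forall X (h : Hom X pobj), h = ppair (comp pr1 h) (comp pr2 h) }.
Arguments ppair {K A B} p {X} : rename.

Definition IsEqualizer (K : Category) (E X Y : K) (f g : Hom X Y) (e : Hom E X)
  : Prop :=
  comp f e = comp g e /\
  forall Z (h : Hom Z X), comp f h = comp g h ->
    exists! u : Hom Z E, comp e u = h.

Record Exponential (K : Category) (A B : K) := {
  eobj : K;
  eprod : Product eobj A;
  ev : Hom (pobj eprod) B;
  ev_univ : forall X (Q : Product X A) (f : Hom (pobj Q) B),
    exists! g : Hom X eobj,
      comp ev (ppair eprod (comp g (pr1 Q)) (pr2 Q)) = f }.

Definition cartesian_closed (K : Category) : Prop :=
  inhabited (Terminal K) /\
  (forall A B : K, inhabited (Product A B)) /\
  (forall A B : K, inhabited (Exponential A B)).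

Definition ArrObj (K : Category) := {X : K & {Y : K & Hom X Y}}.
Definition asrc (K : Category) (p : ArrObj K) : K := projT1 p.
Definition atgt (K : Category) (p : ArrObj K) : K := projT1 (projT2 p).
Definition amor (K : Category) (p : ArrObj K) : Hom (asrc p) (atgt p) :=
  projT2 (projT2 p).

Definition ArrHom (K : Category) (p q : ArrObj K) :=
  {fg : Hom (asrc p) (asrc q) * Hom (atgt p) (atgt q) |
     comp (amor q) fg.1 = comp fg.2 (amor p)}.

Lemma ArrHom_eq (K : Category) (p q : ArrObj K) (u v : ArrHom p q) :
  proj1_sig u = proj1_sig v -> u = v.
Proof.
case: u v => [a Ha] [b Hb] /= E; subst b; f_equal; apply: proof_irrelevance.
Qed.

Definition arr_id (K : Category) (p : ArrObj K) : ArrHom p p.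
Proof. exists (idm _, idm _) => /=; by rewrite comp_id_l comp_id_r. Defined.

Definition arr_comp (K : Category) (p q r : ArrObj K)
  (g : ArrHom q r) (f : ArrHom p q) : ArrHom p r.
Proof.
exists (comp (proj1_sig g).1 (proj1_sig f).1, comp (proj1_sig g).2 (proj1_sig f).2).
case: g f => [[g1 g2] Hg] [[f1 f2] Hf] /=.
rewrite comp_assoc Hg -comp_assoc Hf comp_assoc //.
Defined.

Definition Arrow (K : Category) : Category.
Proof.
refine {| Obj := ArrObj K; Hom := @ArrHom K; idm := @arr_id K;
          comp := @arr_comp K |}.
- move=> X Y f; apply: ArrHom_eq; case: f => [[f1 f2] Hf] /=.
  by rewrite !comp_id_l.
- move=> X Y f; apply: ArrHom_eq; case: f => [[f1 f2] Hf] /=.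
  by rewrite !comp_id_r.
- move=> X Y Z U f g h; apply: ArrHom_eq => /=; by rewrite !comp_assoc.
Defined.

Record CAlgObj (k : comPzRingType) (K : Category) := {
  aobj : K;
  aprod : Product aobj aobj;
  aterm : Terminal K;
  a_add : Hom (pobj aprod) aobj;
  a_mul : Hom (pobj aprod) aobj;
  a_opp : Hom aobj aobj;
  a_zero : Hom (tobj aterm) aobj;
  a_one : Hom (tobj aterm) aobj;
  a_scale : k -> Hom aobj aobj;
  (* axioms, stated on generalized elements x y z : X -> R *)
  a_addA : forall X (x y z : Hom X aobj),
    comp a_add (ppair aprod (comp a_add (ppair aprod x y)) z) =
    comp a_add (ppair aprod x (comp a_add (ppair aprod y z)));
  a_addC : forall X (x y : Hom X aobj),
    comp a_add (ppair aprod x y) = comp a_add (ppair aprod y x);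
  a_add0 : forall X (x : Hom X aobj),
    comp a_add (ppair aprod (comp a_zero (bang aterm X)) x) = x;
  a_addN : forall X (x : Hom X aobj),
    comp a_add (ppair aprod (comp a_opp x) x) = comp a_zero (bang aterm X);
  a_mulA : forall X (x y z : Hom X aobj),
    comp a_mul (ppair aprod (comp a_mul (ppair aprod x y)) z) =
    comp a_mul (ppair aprod x (comp a_mul (ppair aprod y z)));
  a_mulC : forall X (x y : Hom X aobj),
    comp a_mul (ppair aprod x y) = comp a_mul (ppair aprod y x);
  a_mul1 : forall X (x : Hom X aobj),
    comp a_mul (ppair aprod (comp a_one (bang aterm X)) x) = x;
  a_mulDl : forall X (x y z : Hom X aobj),
    comp a_mul (ppair aprod (comp a_add (ppair aprod x y)) z) =
    comp a_add (ppair aprod (comp a_mul (ppair aprod x z))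
                           (comp a_mul (ppair aprod y z)));
  a_scaleDr : forall X (a : k) (x y : Hom X aobj),
    comp (a_scale a) (comp a_add (ppair aprod x y)) =
    comp a_add (ppair aprod (comp (a_scale a) x) (comp (a_scale a) y));
  a_scaleDl : forall X (a b : k) (x : Hom X aobj),
    comp (a_scale (a + b)) x =
    comp a_add (ppair aprod (comp (a_scale a) x) (comp (a_scale b) x));
  a_scaleM : forall X (a b : k) (x : Hom X aobj),
    comp (a_scale (a * b)) x = comp (a_scale a) (comp (a_scale b) x);
  a_scale1 : forall X (x : Hom X aobj), comp (a_scale 1) x = x;
  a_scaleAl : forall X (a : k) (x y : Hom X aobj),
    comp (a_scale a) (comp a_mul (ppair aprod x y)) =
    comp a_mul (ppair aprod (comp (a_scale a) x) y) }.

Definition is_alg_obj_hom (k : comPzRingType) (K : Category)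
  (A B : CAlgObj k K) (f : Hom (aobj A) (aobj B)) : Prop :=
  (forall X (x y : Hom X (aobj A)),
     comp f (comp (a_add A) (ppair (aprod A) x y)) =
     comp (a_add B) (ppair (aprod B) (comp f x) (comp f y))) /\
  (forall X (x y : Hom X (aobj A)),
     comp f (comp (a_mul A) (ppair (aprod A) x y)) =
     comp (a_mul B) (ppair (aprod B) (comp f x) (comp f y))) /\
  (forall X, comp f (comp (a_one A) (bang (aterm A) X)) =
             comp (a_one B) (bang (aterm B) X)) /\
  (forall X (a : k) (x : Hom X (aobj A)),
     comp f (comp (a_scale A a) x) = comp (a_scale B a) (comp f x)).

Definition AlgObjHom (k : comPzRingType) (K : Category) (A B : CAlgObj k K) :=
  {f : Hom (aobj A) (aobj B) | is_alg_obj_hom f}.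

Definition is_ring_hom (A B : comPzRingType) (f : A -> B) : Prop :=
  (forall x y, f (x + y) = f x + f y) /\ (forall x y, f (x * y) = f x * f y)
  /\ f 1 = 1.

Record CAlg (k : comPzRingType) := {
  calg :> comPzRingType;
  cstr : k -> calg;
  cstr_hom : is_ring_hom cstr }.

Definition CHom (k : comPzRingType) (A B : CAlg k) :=
  {f : A -> B | is_ring_hom f /\ forall a, f (cstr A a) = cstr B a}.

Definition chom_fun (k : comPzRingType) (A B : CAlg k) (f : CHom A B) : A -> B :=
  proj1_sig f.

Definition chom_id (k : comPzRingType) (A : CAlg k) : CHom A A.
Proof. by exists id. Defined.

Definition chom_comp (k : comPzRingType) (A B C : CAlg k)
  (g : CHom B C) (f : CHom A B) : CHom A C.
Proof.
exists (fun x => proj1_sig g (proj1_sig f x)).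
case: g f => [g [[g1 [g2 g3]] g4]] [f [[f1 [f2 f3]] f4]] /=.
split; first split.
- by move=> x y; rewrite f1 g1.
- by split; [move=> x y; rewrite f2 g2 | rewrite f3 g3].
- by move=> a; rewrite f4 g4.
Defined.

Definition kC (k : comPzRingType) : CAlg k.
Proof. by exists k id. Defined.

(* A Weil k-algebra: W = k (+) N, with N = ker eps a nilpotent ideal for
   an augmentation eps : W -> k, and W finitely generated free as a
   k-module. *)
Definition is_weil (k : comPzRingType) (W : CAlg k) : Prop :=
  exists eps : CHom W (kC k),
    (exists m : nat, forall x : 'I_m -> W,
        (forall i, proj1_sig eps (x i) = 0) -> \prod_(i < m) x i = 0) /\
    (exists (n : nat) (b : 'I_n -> W),
        (forall w : W, exists c : 'I_n -> k, w = \sum_(i < n) cstr W (c i) * b i)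
        /\ (forall c c' : 'I_n -> k,
              \sum_(i < n) cstr W (c i) * b i = \sum_(i < n) cstr W (c' i) * b i ->
              forall i, c i = c' i)).

Record Weil (k : comPzRingType) := {
  walg :> CAlg k;
  walg_weil : is_weil walg }.

Definition WHom (k : comPzRingType) (W1 W2 : Weil k) := CHom W1 W2.

Lemma kC_weil (k : comPzRingType) : is_weil (kC k).
Proof.
exists (chom_id (kC k)); split.
- exists 1%N => x /= H; by rewrite big_ord1 H.
- exists 1%N, (fun _ => 1); split.
  + move=> w; exists (fun _ => w); by rewrite big_ord1 /= mulr1.
  + move=> c c'; rewrite !big_ord1 /= !mulr1 => E i.
    by rewrite (ord1 i).
Qed.

Definition kW (k : comPzRingType) : Weil k := {| walg := kC k; walg_weil := @kC_weil k |}.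

Definition iotaW (k : comPzRingType) (W : Weil k) : WHom (kW k) W.
Proof.
exists (cstr W); split; [exact: cstr_hom | by []].
Defined.

Record DGCategory (k : comPzRingType) := {
  dgK : Category;
  dgK_lex : finitely_complete dgK;
  dgK_ccc : cartesian_closed dgK;
  dgR : CAlgObj k dgK;
  (* a chosen tensor product W1 (x)_k W2 of Weil algebras, i.e. a
     coproduct in the category of commutative k-algebras *)
  wtens : Weil k -> Weil k -> Weil k;
  wtens_in1 : forall W1 W2, WHom W1 (wtens W1 W2);
  wtens_in2 : forall W1 W2, WHom W2 (wtens W1 W2);
  wtens_univ : forall (W1 W2 : Weil k) (C : CAlg k)
      (f : CHom W1 C) (g : CHom W2 C),
      exists! h : CHom (wtens W1 W2) C,
        chom_comp h (wtens_in1 W1 W2) = f /\ chom_comp h (wtens_in2 W1 W2) = g;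
  (* the functor R (x) . : Weil_k -> k-algebra objects of K *)
  dgRW : Weil k -> CAlgObj k dgK;
  dgRWmap : forall W1 W2 : Weil k, WHom W1 W2 -> AlgObjHom (dgRW W1) (dgRW W2);
  dgRWmap_id : forall W : Weil k, proj1_sig (dgRWmap (chom_id W)) = idm _;
  dgRWmap_comp : forall (W1 W2 W3 : Weil k) (f : WHom W1 W2) (g : WHom W2 W3),
      proj1_sig (dgRWmap (chom_comp g f)) =
      comp (proj1_sig (dgRWmap g)) (proj1_sig (dgRWmap f));
  dgRW_k : dgRW (kW k) = dgR;
  dgT : Weil k -> Functor dgK dgK;
  dgT_lex : forall W, left_exact_functor (dgT W);
  dgT_k : dgT (kW k) = idF dgK;
  dgT_tens : forall W1 W2 : Weil k, compF (dgT W1) (dgT W2) = dgT (wtens W1 W2);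
  dgT_R : forall W, dgT W (aobj dgR) = aobj (dgRW W);
  dgalpha : forall W1 W2 : Weil k, WHom W1 W2 ->
      forall X : dgK, Hom (dgT W1 X) (dgT W2 X);
  dgalpha_nat : forall (W1 W2 : Weil k) (phi : WHom W1 W2) (X Y : dgK) (f : Hom X Y),
      comp (fmap (dgT W2) f) (dgalpha phi X) = comp (dgalpha phi Y) (fmap (dgT W1) f);
  dgalpha_comp : forall (W1 W2 W3 : Weil k) (phi : WHom W1 W2) (psi : WHom W2 W3) X,
      comp (dgalpha psi X) (dgalpha phi X) = dgalpha (chom_comp psi phi) X;
  dgalpha_id : forall (W : Weil k) (X : dgK), dgalpha (chom_id W) X = idm _;
  dgalpha_R : forall (W1 W2 : Weil k) (phi : WHom W1 W2),
      JMeq (dgalpha phi (aobj dgR)) (proj1_sig (dgRWmap phi)) }.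

From mathcomp Require Import all_boot all_algebra.
Set Implicit Arguments. Unset Strict Implicit.

(* V^W is the equalizer of two natural transformations T^W o src => T^W o tgt
   of functors from the arrow category to K.  The source functor preserves all
   limits (it has the left adjoint X |-> id_X), the target functor preserves
   the limits that exist in K (limits of arrows are computed pointwise), and
   T^W is left exact; since equalizers commute with limits, V^W preserves
   finite limits. *)

Lemma limit_hom_ext (J K : Category) (D : Functor J K) (c : Cone D) :
  IsLimit c -> forall X (h1 h2 : Hom X (apex c)),
  (forall j, comp (leg c j) h1 = comp (leg c j) h2) -> h1 = h2.
Proof.
move=> Hc X h1 h2 H.
have nat i j (u : Hom i j) : comp (fmap D u) (comp (leg c i) h1) = comp (leg c j) h1.
  by rewrite comp_assoc leg_nat.
have [h [_ Hu]] := Hc (Build_Cone nat).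
by rewrite -(Hu h1 (fun j => erefl)) (Hu h2 (fun j => esym (H j))).
Qed.

Lemma limit_factor (J K : Category) (D : Functor J K) (c : Cone D) :
  IsLimit c -> forall (X : K) (l : forall j, Hom X (D j)),
  (forall i j (u : Hom i j), comp (fmap D u) (l i) = l j) ->
  exists h : Hom X (apex c), forall j, comp (leg c j) h = l j.
Proof. by move=> Hc X l nat; have [h [Hh _]] := Hc (Build_Cone nat); exists h. Qed.

Lemma limit_of_retract (J K : Category) (D : Functor J K) (c t : Cone D)
  (n : Hom (apex c) (apex t)) (r : Hom (apex t) (apex c)) :
  IsLimit t -> (forall j, comp (leg t j) n = leg c j) ->
  (forall j, comp (leg c j) r = leg t j) -> comp r n = idm (apex c) ->
  IsLimit c.
Proof.
move=> Ht Hn Hr Hrn c'; have [m [Hm _]] := Ht c'.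
exists (comp r m); split=> [j|g Hg]; first by rewrite comp_assoc Hr Hm.
have -> : g = comp r (comp n g) by rewrite comp_assoc Hrn comp_id_l.
congr comp; apply: (limit_hom_ext Ht) => j.
by rewrite Hm comp_assoc Hn Hg.
Qed.

Lemma compF_limit (J K L M : Category) (D : Functor J K) (F : Functor K L)
  (G : Functor L M) (c : Cone D) :
  IsLimit (map_cone G (map_cone F c)) -> IsLimit (map_cone (compF F G) c).
Proof. by move=> H c'; exact: (H (@Build_Cone J M (compF (compF D F) G) _ _ (leg_nat c'))). Qed.

Lemma equalizer_mono (K : Category) (E X Y : K) (f g : Hom X Y) (e : Hom E X) :
  IsEqualizer f g e -> forall Z (a b : Hom Z E), comp e a = comp e b -> a = b.
Proof.
move=> [He Hu] Z a b Hab.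
have H : comp f (comp e a) = comp g (comp e a) by rewrite !comp_assoc He.
have [u [_ Hu']] := Hu Z _ H.
by rewrite -(Hu' a erefl) (Hu' b (esym Hab)).
Qed.

Section EqualizerOfFunctors.
Variables (A K : Category) (F G V : Functor A K).
Variables (f1 f2 : forall p, Hom (F p) (G p)).
Hypothesis f1_nat :
  forall p q (g : Hom p q), comp (fmap G g) (f1 p) = comp (f1 q) (fmap F g).
Hypothesis f2_nat :
  forall p q (g : Hom p q), comp (fmap G g) (f2 p) = comp (f2 q) (fmap F g).
Variable e : forall p, Hom (V p) (F p).
Hypothesis e_equalizer : forall p, IsEqualizer (f1 p) (f2 p) (e p).
Hypothesis e_nat :
  forall p q (g : Hom p q), comp (e q) (fmap V g) = comp (fmap F g) (e p).

Lemma equalizer_preserves_limit (J : Category) (D : Functor J A) (c : Cone D) :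
  IsLimit (map_cone F c) -> IsLimit (map_cone G c) -> IsLimit (map_cone V c).
Proof.
move=> HF HG c'.
have nat i j (u : Hom i j) :
    comp (fmap F (fmap D u)) (comp (e (D i)) (leg c' i)) = comp (e (D j)) (leg c' j).
  by rewrite comp_assoc -e_nat -comp_assoc (leg_nat c' u).
have [h [Hh Hhu]] := HF (@Build_Cone _ _ (compF D F) _ _ nat).
have h_equalizes : comp (f1 (apex c)) h = comp (f2 (apex c)) h.
  apply: (limit_hom_ext HG) => j /=.
  rewrite !comp_assoc f1_nat f2_nat -!comp_assoc [comp (fmap F _) h]Hh /=.
  by rewrite !comp_assoc (proj1 (e_equalizer (D j))).
have [u [Hu _]] := proj2 (e_equalizer (apex c)) _ h h_equalizes.
have Hleg j : comp (fmap V (leg c j)) u = leg c' j.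
  apply: (equalizer_mono (e_equalizer (D j))).
  by rewrite comp_assoc e_nat -comp_assoc Hu (Hh j).
exists u; split=> [//|u' Hu'].
apply: (equalizer_mono (e_equalizer (apex c))).
rewrite Hu; apply: Hhu => j /=.
by rewrite comp_assoc -e_nat -comp_assoc Hu'.
Qed.

End EqualizerOfFunctors.

Definition srcF (K : Category) : Functor (Arrow K) K.
Proof.
by refine (@Build_Functor (Arrow K) K (@asrc K) (fun p q f => (proj1_sig f).1) _ _).
Defined.

Definition tgtF (K : Category) : Functor (Arrow K) K.
Proof.
by refine (@Build_Functor (Arrow K) K (@atgt K) (fun p q f => (proj1_sig f).2) _ _).
Defined.

Section ArrowCategory.
Variable K : Category.

Definition arr_of (X Y : K) (f : Hom X Y) : Arrow K := existT _ X (existT _ Y f).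

Lemma arrow_square (p q : Arrow K) (f : Hom p q) :
  comp (amor q) (proj1_sig f).1 = comp (proj1_sig f).2 (amor p).
Proof. exact: (proj2_sig f). Qed.

Lemma arrow_hom_eq (p q : Arrow K) (f g : Hom p q) :
  (proj1_sig f).1 = (proj1_sig g).1 -> (proj1_sig f).2 = (proj1_sig g).2 -> f = g.
Proof.
move=> H1 H2; apply: ArrHom_eq.
by move: H1 H2; case: (proj1_sig f) (proj1_sig g) => ? ? [? ?] /= -> ->.
Qed.

Definition from_id_arrow (X : K) (p : Arrow K) (g : Hom X (asrc p)) :
  Hom (arr_of (idm X)) p.
Proof. by exists (g, comp (amor p) g); rewrite /= comp_id_r. Defined.

Lemma comp_from_id_arrow (X : K) (p q : Arrow K) (g : Hom X (asrc p)) (u : Hom p q) :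
  comp u (from_id_arrow g) = from_id_arrow (comp (proj1_sig u).1 g).
Proof.
apply: arrow_hom_eq => //=.
by rewrite !comp_assoc arrow_square.
Qed.

Lemma src_preserves_limit (J : Category) (D : Functor J (Arrow K)) (c : Cone D) :
  IsLimit c -> IsLimit (map_cone (srcF K) c).
Proof.
move=> Hc c'.
have nat i j (u : Hom i j) :
    comp (fmap D u) (from_id_arrow (leg c' i)) = from_id_arrow (leg c' j).
  by rewrite comp_from_id_arrow (leg_nat c' u).
have [h [Hh Hhu]] := Hc (Build_Cone nat).
exists (proj1_sig h).1; split=> [j|g Hg].
  by have /= := f_equal (fun f => (proj1_sig f).1) (Hh j).
suff -> : h = from_id_arrow g by [].
by apply: Hhu => j; rewrite comp_from_id_arrow; congr from_id_arrow; apply: Hg.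
Qed.

(* With [n : atgt (apex c) -> apex t] the comparison map, the arrow
   [n o amor (apex c)] carries a cone over [D]; factoring it through [c]
   yields a retraction of [n]. *)
Lemma tgt_preserves_limit (J : Category) (D : Functor J (Arrow K)) (c : Cone D)
  (t : Cone (compF D (tgtF K))) :
  IsLimit t -> IsLimit c -> IsLimit (map_cone (tgtF K) c).
Proof.
move=> Ht Hc.
have [n Hn] := limit_factor Ht (leg_nat (map_cone (tgtF K) c)).
pose P := arr_of (comp n (amor (apex c))).
have l_square j :
    comp (amor (D j)) (proj1_sig (leg c j)).1 = comp (leg t j) (amor P).
  by rewrite /= comp_assoc Hn arrow_square.
pose l j : Hom P (D j) := exist _ ((proj1_sig (leg c j)).1, leg t j) (l_square j).
have l_nat i j (u : Hom i j) : comp (fmap D u) (l i) = l j.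
  apply: arrow_hom_eq; last exact: (leg_nat t u).
  exact: (f_equal (fun f => (proj1_sig f).1) (leg_nat c u)).
have [phi Hphi] := limit_factor Hc l_nat.
have psi_square : comp (amor P) (idm _) = comp n (amor (apex c)).
  exact: comp_id_r.
pose psi : Hom (apex c) P := exist _ (idm _, n) psi_square.
have phi_psi : comp phi psi = idm (apex c).
  apply: (limit_hom_ext Hc) => j; rewrite comp_id_r comp_assoc Hphi.
  by apply: arrow_hom_eq; rewrite /= ?comp_id_r ?Hn.
apply: (@limit_of_retract _ _ _ (map_cone (tgtF K) c) t n (proj1_sig phi).2 Ht Hn).
- by move=> j; have := f_equal (fun f => (proj1_sig f).2) (Hphi j).
- exact: (f_equal (fun f => (proj1_sig f).2) phi_psi).
Qed.

Lemma amor_natural (L : Category) (T : Functor K L) (p q : Arrow K) (g : Hom p q) :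
  comp (fmap T (proj1_sig g).2) (fmap T (amor p)) =
  comp (fmap T (amor q)) (fmap T (proj1_sig g).1).
Proof. by rewrite -!fmap_comp arrow_square. Qed.

End ArrowCategory.

Lemma dgalpha_amor_natural (k : comPzRingType) (D : DGCategory k) (W1 W2 W3 : Weil k)
  (phi : WHom W1 W2) (psi : WHom W2 W3) (p q : Arrow (dgK D)) (g : Hom p q) :
  comp (fmap (dgT D W3) (proj1_sig g).2)
    (comp (dgalpha psi (atgt p)) (comp (fmap (dgT D W2) (amor p)) (dgalpha phi (asrc p)))) =
  comp (comp (dgalpha psi (atgt q)) (comp (fmap (dgT D W2) (amor q)) (dgalpha phi (asrc q))))
    (fmap (dgT D W1) (proj1_sig g).1).
Proof.
rewrite comp_assoc dgalpha_nat -!comp_assoc; congr comp.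
by rewrite comp_assoc amor_natural -!comp_assoc dgalpha_nat.
Qed.

Theorem corollary5p4 (k : comPzRingType) (D : DGCategory k) (W : Weil k)
  (tauW : WHom W (kW k))
  (V : Functor (Arrow (dgK D)) (dgK D))
  (e : forall p : Arrow (dgK D), Hom (V p) (dgT D W (asrc p)))
  (He : forall p : Arrow (dgK D),
      IsEqualizer (fmap (dgT D W) (amor p))
        (comp (@dgalpha k D _ _ (iotaW W) (atgt p))
              (comp (fmap (dgT D (kW k)) (amor p)) (@dgalpha k D _ _ tauW (asrc p))))
        (e p))
  (HV : forall (p q : Arrow (dgK D)) (f : Hom p q),
      comp (e q) (fmap V f) = comp (fmap (dgT D W) (proj1_sig f).1) (e p)) :
  left_exact_functor V.
Proof.
move=> J HJ Dg c Hc.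
have [t Ht] := @dgK_lex _ D J HJ (compF Dg (tgtF (dgK D))).
apply: (@equalizer_preserves_limit _ _ (compF (srcF _) (dgT D W))
          (compF (tgtF _) (dgT D W)) V _ _ (amor_natural (dgT D W))
          (dgalpha_amor_natural tauW (iotaW W)) e He HV).
- exact/compF_limit/(dgT_lex HJ)/src_preserves_limit.
- exact/compF_limit/(dgT_lex HJ)/(tgt_preserves_limit Ht).
Qed.
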